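(* Let $\|\cdot\|$ be a norm on $\mathbb{R}^d$ and $T:\mathbb{R}^d\to\mathbb{R}^d$ a contraction with parameter $\gamma\in(0,1)$, i.e. $\|Tx-Ty\|\le\gamma\|x-y\|$, with unique fixed point $x^*$. Let $(\beta_n)_{n\ge1}\subseteq(0,1)$ be increasing, $x^0\in\mathbb{R}^d$, and $(x^n)$ generated by $x^n=(1-\beta_n)x^0+\beta_n(Tx^{n-1}+U_n)$, $n\ge1$, for arbitrary random vectors $U_n$. Then for every $n\ge1$, $$\|x^n-x^*\|\le\sum_{i=0}^n\gamma^{n-i}B_{i+1}^n\bigl((1-\beta_i)\|x^0-x^*\|+\beta_i\|U_i\|\bigr).$$
   Context: Notation: $B_i^n:=\prod_{j=i}^n\beta_j$ with $B_i^n=1$ if $i>n$; convention $\beta_0=0$ (so the $i=0$ term equals $\gamma^nB_1^n\|x^0-x^*\|$). *)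

From HB Require Import structures.
From mathcomp Require Import all_boot all_order all_algebra.
From mathcomp Require Import reals.
Set Implicit Arguments. Unset Strict Implicit. Unset Printing Implicit Defensive.
Import Order.TTheory GRing.Theory Num.Theory.
Local Open Scope ring_scope.

Definition is_norm (R : realType) (d : nat) (N : 'rV[R]_d -> R) : Prop :=
  [/\ forall x, 0 <= N x,
      forall x, N x = 0 -> x = 0,
      forall (a : R) x, N (a *: x) = `|a| * N x
    & forall x y, N (x + y) <= N x + N y].

(* B_i^n = prod_{j=i}^n beta_j  (empty product = 1 when i > n). *)
Definition Bprod (R : realType) (beta : nat -> R) (i n : nat) : R :=
  \prod_(i <= j < n.+1) beta j.

From HB Require Import structures.
From mathcomp Require Import all_boot all_order all_algebra.
From mathcomp Require Import reals.
From mathcomp Require Import ring lra.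
Set Implicit Arguments. Unset Strict Implicit.
Import Order.TTheory GRing.Theory Num.Theory.
Local Open Scope ring_scope.

(* Writing e_n := N (x^n - x^* ) and c_n := (1 - beta_n) N (x^0 - x^* ) + beta_n N (U_n),
   convexity of the norm, the contraction property and T x^* = x^* give the one-step
   recursion e_n <= c_n + beta_n gamma e_{n-1}, with e_0 = c_0 since beta_0 = 0.
   The claimed bound is exactly the solution of the recursion with equality. *)

Lemma affine_combB (R : pzRingType) (V : lmodType R) (b : R) (a v s : V) :
  (1 - b) *: a + b *: v - s = (1 - b) *: (a - s) + b *: (v - s).
Proof. by rewrite !scalerBr addrACA -opprD -scalerDl subrK scale1r addrAC. Qed.

Section AnchoredStep.

Variables (R : realDomainType) (V : lmodType R) (N : V -> R).
Hypothesis normZ : forall (a : R) (v : V), N (a *: v) = `|a| * N v.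
Hypothesis normD : forall u v : V, N (u + v) <= N u + N v.

Lemma norm_convex_comb (b : R) (u v : V) : 0 <= b <= 1 ->
  N ((1 - b) *: u + b *: v) <= (1 - b) * N u + b * N v.
Proof.
move=> /andP[b_ge0 b_le1]; apply: le_trans (normD _ _) _.
by rewrite !normZ ger0_norm ?subr_ge0 // ger0_norm.
Qed.

Variables (T : V -> V) (gamma : R) (xstar : V).
Hypothesis T_lipschitz : forall y z, N (T y - T z) <= gamma * N (y - z).
Hypothesis T_fix : T xstar = xstar.

Lemma anchored_step_err (b : R) (a w y : V) : 0 <= b <= 1 ->
  N ((1 - b) *: a + b *: (T y + w) - xstar) <=
    ((1 - b) * N (a - xstar) + b * N w) + b * gamma * N (y - xstar).
Proof.
move=> b01; have /andP[b_ge0 _] := b01.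
rewrite affine_combB; apply: le_trans (norm_convex_comb _ _ b01) _.
have step : N (T y + w - xstar) <= gamma * N (y - xstar) + N w.
  rewrite -[X in _ + _ - X]T_fix addrAC.
  by apply: le_trans (normD _ _) _; rewrite lerD2r.
have := ler_wpM2l b_ge0 step; lra.
Qed.

End AnchoredStep.

Lemma Bprod_empty (R : realType) (beta : nat -> R) (i n : nat) :
  (n < i)%N -> Bprod beta i n = 1.
Proof. exact: big_geq. Qed.

Definition anchored_bound (R : realType) (gamma : R) (beta c : nat -> R) (n : nat) :=
  \sum_(0 <= i < n.+1) gamma ^+ (n - i) * Bprod beta i.+1 n * c i.

Lemma anchored_bound0 (R : realType) (gamma : R) (beta c : nat -> R) :
  anchored_bound gamma beta c 0 = c 0%N.
Proof. by rewrite /anchored_bound big_nat1 Bprod_empty // !mul1r. Qed.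

Lemma anchored_boundS (R : realType) (gamma : R) (beta c : nat -> R) (n : nat) :
  anchored_bound gamma beta c n.+1 =
    c n.+1 + beta n.+1 * gamma * anchored_bound gamma beta c n.
Proof.
rewrite /anchored_bound big_nat_recr //= subnn Bprod_empty // !mul1r addrC.
congr (_ + _); rewrite big_distrr /=.
apply: eq_big_nat => i /andP[_ lt_in].
by rewrite subSn // exprS /Bprod big_nat_recr //=; ring.
Qed.

Theorem proposition2 (R : realType) (d : nat) (N : 'rV[R]_d -> R)
  (T : 'rV[R]_d -> 'rV[R]_d) (gamma : R) (xstar : 'rV[R]_d)
  (beta : nat -> R) (x0 : 'rV[R]_d) (U : nat -> 'rV[R]_d)
  (x : nat -> 'rV[R]_d) :
  is_norm N ->
  0 < gamma < 1 ->
  (forall y z, N (T y - T z) <= gamma * N (y - z)) ->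
  T xstar = xstar ->
  (forall y, T y = y -> y = xstar) ->
  beta 0%N = 0 ->
  (forall n, (1 <= n)%N -> 0 < beta n < 1) ->
  (forall n m, (1 <= n)%N -> (n <= m)%N -> beta n <= beta m) ->
  x 0%N = x0 ->
  (forall n, (1 <= n)%N ->
     x n = (1 - beta n) *: x0 + beta n *: (T (x n.-1) + U n)) ->
  forall n, (1 <= n)%N ->
    N (x n - xstar) <=
      \sum_(0 <= i < n.+1)
         gamma ^+ (n - i) * Bprod beta i.+1 n *
           ((1 - beta i) * N (x0 - xstar) + beta i * N (U i)).
Proof.
move=> [_ _ normZ normD] /andP[gamma_gt0 _] T_lipschitz T_fix _ beta0 beta01 _
  x_0 x_S n _.
set c := fun i => (1 - beta i) * N (x0 - xstar) + beta i * N (U i).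
suff: N (x n - xstar) <= anchored_bound gamma beta c n by [].
elim: n => [|n IH].
  by rewrite anchored_bound0 /c beta0 x_0 subr0 mul0r addr0 mul1r.
have /andP[beta_gt0 beta_lt1] := beta01 n.+1 isT.
have beta_01 : 0 <= beta n.+1 <= 1 by rewrite !ltW.
rewrite anchored_boundS x_S //=.
apply: le_trans (anchored_step_err normZ normD T_lipschitz T_fix _ _ _ beta_01) _.
by rewrite lerD2l ler_wpM2l // mulr_ge0 // ltW.
Qed.
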